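(* Let $K$ be a differential field of characteristic zero with a set $\Delta=\{\partial_1,\ldots,\partial_m\}$ of pairwise commuting derivations, let $R=K\{y_1,\ldots,y_n\}$, let $l\geqslant 0$, and let $J\subseteq R_l$ be an ideal. Let $p>0$ be an integer such that $(J')^p\subseteq J^{(1)}$. Then, for all integers $k\geqslant 0$, $$\sqrt{J'^{(k)}}\subseteq \sqrt{J^{(kp+1)}},$$ where the left radical is taken in $R_{l+k}$, the right radical in $R_{l+kp+1}$, and the inclusion is as subsets of $R$.
   Context: Let $\Theta=\{\partial_1^{i_1}\cdots\partial_m^{i_m} : i_j\geqslant 0\}$ and, for $\theta=\partial_1^{i_1}\cdots\partial_m^{i_m}$, let $\operatorname{ord}\theta=i_1+\cdots+i_m$. The ring of differential polynomials is $R=K\{y_1,\ldots,y_n\}=K[\theta y_i : \theta\in\Theta,\ 1\leqslant i\leqslant n]$ (a polynomial ring in the infinitely many variables $\theta y_i$, with the derivations extended by $\partial_j(\theta y_i)=(\partial_j\theta)y_i$), and for $h\geqslant 0$, $R_h=K[\theta y_i : 1\leqslant i\leqslant n,\ \operatorname{ord}\theta\leqslant h]$. For an ideal $J\subseteq R_l$ and $k\geqslant 0$, $J^{(k)}$ denotes the ideal of $R_{l+k}$ generated by $\{\theta g : g\in J,\ \theta\in\Theta,\ \operatorname{ord}\theta\leqslant k\}$. For an ideal $J\subseteq R_l$, $J'$ denotes $\sqrt{J^{(1)}}\cap R_l$, i.e. the radical in $R_{l+1}$ of the ideal generated by $\{\theta g: g\in J,\ \operatorname{ord}\theta\leqslant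 1\}$, intersected with $R_l$; $J'$ is an ideal of $R_l$, so $J'^{(k)}$ is an ideal of $R_{l+k}$. $(J')^p$ denotes the $p$-th power of the ideal $J'$. *)

From HB Require Import structures.
From mathcomp Require Import all_boot all_algebra.
From mathcomp Require Import finmap.
From mathcomp Require Import monalg.
Set Implicit Arguments. Unset Strict Implicit. Unset Printing Implicit Defensive.
Import GRing.Theory.
Local Open Scope ring_scope.

(* Variables  theta y_i : theta = d_1^{a_1}..d_m^{a_m} encoded by a : 'I_m -> nat. *)
Definition dvar (m n : nat) := ({ffun 'I_m -> nat} * 'I_n)%type.

(* R = K{y_1..y_n} : polynomial ring over K in the variables theta y_i. *)
Definition dpoly (K : fieldType) (m n : nat) := {malg K[cmonom (dvar m n)]}.

Definition yvar (K : fieldType) (m n : nat) (v : dvar m n) : dpoly K m n :=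
  mkmalgU (ucm v) 1.

Definition dconst (K : fieldType) (m n : nat) (c : K) : dpoly K m n := c%:MP.

Definition aord (m : nat) (a : {ffun 'I_m -> nat}) : nat := (\sum_(j < m) a j)%N.
Definition vord (m n : nat) (v : dvar m n) : nat := aord v.1.

Definition vshift (m n : nat) (j : 'I_m) (v : dvar m n) : dvar m n :=
  ([ffun k => (v.1 k + (k == j))%N], v.2).

Definition is_derivation (A : comRingType) (f : A -> A) : Prop :=
  (forall x y, f (x + y) = f x + f y) /\ (forall x y, f (x * y) = f x * y + x * f y).

Definition inR (K : fieldType) (m n : nat) (h : nat) (x : dpoly K m n) : Prop :=
  forall (mo : cmonom (dvar m n)), mo \in msupp x ->
    forall v : dvar m n, (mo v != 0)%N -> (vord v <= h)%N.

Definition is_ideal_in (K : fieldType) (m n : nat) (h : nat)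
  (J : dpoly K m n -> Prop) : Prop :=
  [/\ (forall x, J x -> inR h x), J 0,
      (forall x y, J x -> J y -> J (x + y)) &
      (forall r x, inR h r -> J x -> J (r * x))].

Definition gen_in (K : fieldType) (m n : nat) (h : nat)
  (S : dpoly K m n -> Prop) (x : dpoly K m n) : Prop :=
  exists (N : nat) (r g : 'I_N -> dpoly K m n),
    (forall i, inR h (r i) /\ S (g i)) /\ x = \sum_(i < N) r i * g i.

Definition rad_in (K : fieldType) (m n : nat) (h : nat)
  (I : dpoly K m n -> Prop) (x : dpoly K m n) : Prop :=
  inR h x /\ exists e : nat, I (x ^+ e).

Definition theta (K : fieldType) (m n : nat) (D : 'I_m -> dpoly K m n -> dpoly K m n)
  (a : {ffun 'I_m -> nat}) (g : dpoly K m n) : dpoly K m n :=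
  foldr (fun j x => iter (a j) (D j) x) g (enum 'I_m).

Definition Jk (K : fieldType) (m n : nat) (D : 'I_m -> dpoly K m n -> dpoly K m n)
  (l : nat) (J : dpoly K m n -> Prop) (k : nat) : dpoly K m n -> Prop :=
  gen_in (l + k)
    (fun x => exists g a, [/\ J g, (aord a <= k)%N & x = theta D a g]).

Definition Jprime (K : fieldType) (m n : nat) (D : 'I_m -> dpoly K m n -> dpoly K m n)
  (l : nat) (J : dpoly K m n -> Prop) : dpoly K m n -> Prop :=
  fun x => rad_in (l + 1) (Jk D l J 1) x /\ inR l x.

Definition ideal_pow (K : fieldType) (m n : nat) (h : nat)
  (I : dpoly K m n -> Prop) (p : nat) : dpoly K m n -> Prop :=
  gen_in h (fun x => exists g : 'I_p -> dpoly K m n,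
                       (forall i, I (g i)) /\ x = \prod_(i < p) g i).

(* Write [theta_w] for the composite of the derivations along a word [w]; its
   multi-index is the letter count of [w].  For [a] in [J'] one shows that
   [theta_w a] lies in the radical [Q] of [J^(kp+1)] when [|w| <= k], by
   well-founded induction on the multi-index [al] of [w] for the graded
   (degrevlex) monomial order.  As [a^p] lies in [(J')^p], hence in [J^(1)],
   the derivative of [a^p] along [w] repeated [p] times lies in [J^(kp+1)].
   By the Leibniz rule it is a sum of products [theta_u1 a * ... * theta_up a]
   with multi-indices summing to [p al].  A product with some factor of index
   below [al] is in [Q] by induction; since the order is compatible with
   addition, all other products equal [(theta_w a)^p], which therefore occurs
   with a positive integer multiplicity.  In characteristic zero this
   multiplicity is invertible, so [(theta_w a)^p], hence [theta_w a], is in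
   [Q].  The generators [theta a] of [J'^(k)] are thus in [Q]. *)

From HB Require Import structures.
From mathcomp Require Import all_boot all_order all_algebra.
From mathcomp Require Import finmap.
From mathcomp Require Import monalg.
From mathcomp Require mpoly.
Set Implicit Arguments. Unset Strict Implicit. Unset Printing Implicit Defensive.
Import Order.Theory GRing.Theory.
Local Open Scope ring_scope.

Definition dword (m : nat) (R : Type) (D : 'I_m -> R -> R) (w : seq 'I_m) (x : R) : R :=
  foldr D x w.

Fixpoint splits (T : Type) (w : seq T) : seq (seq T * seq T) :=
  if w is j :: w' then
    [seq (j :: uv.1, uv.2) | uv <- splits w'] ++ [seq (uv.1, j :: uv.2) | uv <- splits w']
  else [:: ([::], [::])].

Definition word_of (m : nat) (a : 'I_m -> nat) : seq 'I_m :=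
  flatten [seq nseq (a i) i | i <- enum 'I_m].

Lemma perm_count_mem (T : eqType) (s1 s2 : seq T) :
  (forall x, count_mem x s1 = count_mem x s2) -> perm_eq s1 s2.
Proof. by move=> E; apply/allP => x _ /=; rewrite E. Qed.

Lemma count_word_of (m : nat) (a : 'I_m -> nat) i : count_mem i (word_of a) = a i.
Proof.
rewrite count_flatten sumnE !big_map -enumT big_enum /=.
under eq_bigr => j _ do rewrite count_nseq /=.
by rewrite (bigD1 i) //= eqxx mul1n big1 ?addn0 // => j /negbTE ->.
Qed.

Lemma size_word_of (m : nat) (a : {ffun 'I_m -> nat}) : size (word_of a) = aord a.
Proof.
rewrite size_flatten /shape sumnE -map_comp !big_map -enumT big_enum /=.
by apply: eq_bigr => i _; rewrite size_nseq.
Qed.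

Lemma dword_cons (m : nat) (R : Type) (D : 'I_m -> R -> R) j w x :
  dword D (j :: w) x = D j (dword D w x).
Proof. by []. Qed.

Lemma dword_cat (m : nat) (R : Type) (D : 'I_m -> R -> R) u v x :
  dword D (u ++ v) x = dword D u (dword D v x).
Proof. exact: foldr_cat. Qed.

Section Derivations.
Variables (R : comNzRingType) (m : nat) (D : 'I_m -> R -> R).
Hypothesis derivD : forall j, is_derivation (D j).

Lemma derD j x y : D j (x + y) = D j x + D j y.
Proof. by case: (derivD j). Qed.

Lemma derM j x y : D j (x * y) = D j x * y + x * D j y.
Proof. by case: (derivD j). Qed.

Lemma der0 j : D j 0 = 0.
Proof. by apply/(addrI (D j 0)); rewrite -derD !addr0. Qed.

Lemma der_sum j (I : Type) (s : seq I) (F : I -> R) :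
  D j (\sum_(i <- s) F i) = \sum_(i <- s) D j (F i).
Proof. by elim: s => [|i s IH]; rewrite ?big_nil ?der0 // !big_cons derD IH. Qed.

Lemma der_commD i j x y : D i (D j x) = D j (D i x) -> D i (D j y) = D j (D i y) ->
  D i (D j (x + y)) = D j (D i (x + y)).
Proof. by move=> Ex Ey; rewrite !derD Ex Ey. Qed.

Lemma der_commM i j x y : D i (D j x) = D j (D i x) -> D i (D j y) = D j (D i y) ->
  D i (D j (x * y)) = D j (D i (x * y)).
Proof. by move=> Ex Ey; rewrite !derM !derD !derM Ex Ey addrACA. Qed.

Lemma dword_mul w x y :
  dword D w (x * y) = \sum_(uv <- splits w) dword D uv.1 x * dword D uv.2 y.
Proof.
elim: w => [|j w IH] /=; first by rewrite big_seq1.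
rewrite IH der_sum big_cat !big_map /= -big_split /=.
by apply: eq_bigr => uv _; rewrite derM.
Qed.

Hypothesis derC : forall i j x, D i (D j x) = D j (D i x).

Lemma der_dword j w x : D j (dword D w x) = dword D w (D j x).
Proof. by elim: w => [|i w IH] //=; rewrite derC IH. Qed.

Lemma dword_perm (u v : seq 'I_m) x : perm_eq u v -> dword D u x = dword D v x.
Proof.
elim: u v => [|j u IH] v; first by rewrite perm_sym => /perm_nilP ->.
move=> uv; have jv : j \in v by rewrite -(perm_mem uv) mem_head.
move: uv; case/splitPr: jv => v1 v2 uv.
have : perm_eq (j :: u) (j :: v1 ++ v2).
  by apply: perm_trans uv _; rewrite -cat1s perm_catCA.
by rewrite perm_cons dword_cons => /IH ->; rewrite !dword_cat dword_cons der_dword.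
Qed.
End Derivations.

Section Filtration.
Variables (K : fieldType) (m n : nat).
Local Notation R := (dpoly K m n).
Implicit Types (x y : R) (h : nat).

Lemma inR_mono h h' x : (h <= h')%N -> inR h x -> inR h' x.
Proof. by move=> le_h Hx mo Hmo v Hv; apply: leq_trans (Hx mo Hmo v Hv) le_h. Qed.

Lemma inR0 h : inR h (0 : R).
Proof. by move=> mo; rewrite msupp0 in_fset0. Qed.

Lemma inRD h x y : inR h x -> inR h y -> inR h (x + y).
Proof.
move=> Hx Hy mo /(fsubsetP (msuppD_le x y)); rewrite in_fsetU.
by case/orP; [exact: Hx|exact: Hy].
Qed.

Lemma inRN h x : inR h x -> inR h (- x).
Proof. by move=> Hx mo; rewrite msuppN; exact: Hx. Qed.

Lemma inRM h x y : inR h x -> inR h y -> inR h (x * y).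
Proof.
move=> Hx Hy mo /msuppM_le [k1 [k2 [k1x k2y ->]]] v.
rewrite cmM; case: (posnP (k1 v)) => [->|/lt0n_neq0 k1v _].
  exact: Hy k2 k2y v.
exact: Hx k1 k1x v k1v.
Qed.

Lemma inRC h (c : K) : inR h (dconst m n c).
Proof. by move=> mo /(fsubsetP (msuppC_le c)); rewrite in_fset1 => /eqP -> v; rewrite cm1. Qed.

Lemma inR1 h : inR h (1 : R).
Proof. by rewrite -mpolyC1E; exact: inRC. Qed.

Lemma inRX h x e : inR h x -> inR h (x ^+ e).
Proof. by move=> Hx; elim: e => [|e IH]; rewrite ?expr0 ?exprS; [exact: inR1|exact: inRM]. Qed.

Lemma inRy h (v : dvar m n) : (vord v <= h)%N -> inR h (yvar K v).
Proof.
move=> Hv mo /(fsubsetP msuppU_le); rewrite in_fset1 => /eqP -> w.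
by rewrite cmU; case: (v =P w) => [<-|].
Qed.

Lemma inR_ind h (P : R -> Prop) :
  (forall c, P (dconst m n c)) ->
  (forall v, (vord v <= h)%N -> P (yvar K v)) ->
  (forall x y, P x -> P y -> P (x + y)) ->
  (forall x y, P x -> P y -> P (x * y)) ->
  forall x, inR h x -> P x.
Proof.
move=> PC Py PD PM.
have Pmonom (mo : cmonom (dvar m n)) :
    (forall v, mo v != 0%N -> (vord v <= h)%N) -> P << mo >>.
  elim: {mo}(mdeg mo).+1 {-2}mo (ltnSn (mdeg mo)) => // N IH mo.
  rewrite ltnS => le_mo_N mo_h.
  have [/eqP|mo_neq0] := eqVneq (mdeg mo) 0%N.
    by rewrite mdeg_eq0 => /eqP ->; exact: PC.
  have /fset0Pn [v] : finsupp mo != fset0.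
    by apply: contra mo_neq0 => /eqP E; rewrite mdegE E big_seq_fset0.
  rewrite -cmE_neq0 => mo_v.
  have Emo : mo = mmul (ucm v) (divcm mo (ucm v)).
    apply/eqP/cmP => i; rewrite cmM divcmE cmU.
    case: eqP => [<-|_]; last by rewrite subn0.
    by rewrite add1n subn1 prednK // lt0n.
  have -> : (<< mo >> : R) = yvar K v * << divcm mo (ucm v) >>.
    by rewrite {1}Emo /yvar malgM_def fgmulUU mulr1.
  apply: PM; first exact/Py/mo_h.
  apply: IH => [|w]; last by rewrite divcmE => mo_w; apply: mo_h; apply: contra mo_w => /eqP ->.
  by move: le_mo_N; rewrite {1}Emo mdegM mdegU add1n; apply: leq_trans.
move=> x Hx; rewrite (monalgE x) big_seq.
apply: (big_ind P); [by rewrite -malgC0E; exact: PC|exact: PD|] => mo mo_x.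
have -> : << x@_mo *g mo >> = dconst m n x@_mo * (<< mo >> : R).
  by rewrite /dconst malgM_def fgmulUU mulr1 mul1m.
by apply: PM; [exact: PC|apply: Pmonom => v; apply: Hx].
Qed.

Lemma inR_exists x : exists h, inR h x.
Proof.
exists (\max_(mo <- msupp x) \max_(v <- finsupp mo) vord v)%N => mo mo_x v mo_v.
apply: leq_trans (leq_bigmax_seq _ mo_x isT).
by apply: leq_bigmax_seq => //; rewrite -cmE_neq0.
Qed.

Lemma dword_level (D : 'I_m -> R -> R) (w : seq 'I_m) h x :
    (forall h j x, inR h x -> inR h.+1 (D j x)) ->
  inR h x -> inR (h + size w) (dword D w x).
Proof. by move=> Dl Hx; elim: w => [|j w IH]; rewrite ?addn0 // addnS; apply: Dl. Qed.
End Filtration.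

Section Ideals.
Variables (K : fieldType) (m n : nat).
Local Notation R := (dpoly K m n).
Implicit Types (x y r z : R) (S I : R -> Prop).

Section IdealTheory.
Variables (h : nat) (I : R -> Prop).
Hypothesis idI : is_ideal_in h I.

Lemma ideal_inR x : I x -> inR h x. Proof. by case: idI => idR _ _ _ /idR. Qed.
Lemma ideal0 : I 0. Proof. by case: idI. Qed.
Lemma idealD x y : I x -> I y -> I (x + y). Proof. by case: idI => _ _ idD _; apply: idD. Qed.
Lemma idealM r x : inR h r -> I x -> I (r * x). Proof. by case: idI => _ _ _ idM; apply: idM. Qed.

Lemma idealN x : I x -> I (- x).
Proof. by move=> Ix; rewrite -mulN1r; apply: idealM => //; apply/inRN/inR1. Qed.

Lemma idealB x y : I x -> I y -> I (x - y).
Proof. by move=> Ix Iy; apply/idealD/idealN. Qed.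

Lemma ideal_sum (T : Type) (s : seq T) (F : T -> R) :
  (forall t, I (F t)) -> I (\sum_(t <- s) F t).
Proof. by move=> IF; apply: big_ind => //; [exact: ideal0|exact: idealD]. Qed.

Lemma ideal_mulrn x c : I x -> I (x *+ c).
Proof. by move=> Ix; elim: c => [|c IH]; rewrite ?mulr0n ?mulrS; [exact: ideal0|exact: idealD]. Qed.

Lemma ideal_mulrn_inv x c :
  [pchar K] =i pred0 -> (0 < c)%N -> I (x *+ c) -> I x.
Proof.
move=> char0 c_gt0 Ixc; have c_neq0 : (c%:R : K) != 0.
  by move/pcharf0P: char0 => ->; rewrite -lt0n.
have -> : x = dconst m n (c%:R^-1) * (x *+ c).
  by rewrite -[x *+ c]mulr_natl mulrA /dconst -mpolyC_nat -mpolyCM mulVf // mul1r.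
by apply: idealM Ixc; apply: inRC.
Qed.

Lemma ideal_sum_mulrn (T : eqType) (s : seq T) (F : T -> R) (P : pred T) z :
  (forall t, t \in s -> exists2 c, I (F t - z *+ c) & (0 < c)%N = P t) ->
  exists2 c, I (\sum_(t <- s) F t - z *+ c) & (0 < c)%N = has P s.
Proof.
elim: s => [|t s IH] IF; first by exists 0%N; rewrite ?big_nil ?subr0 //; exact: ideal0.
have [c1 I1 E1] := IF t (mem_head t s).
have [c2 I2 E2] : exists2 c, I (\sum_(t <- s) F t - z *+ c) & (0 < c)%N = has P s.
  by apply: IH => t' t's; apply: IF; rewrite inE t's orbT.
exists (c1 + c2)%N; last by rewrite /= -E1 -E2 addn_gt0.
by rewrite big_cons mulrnDr opprD addrACA; apply: idealD.
Qed.

Lemma rad_in_ideal : is_ideal_in h (rad_in h I).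
Proof.
split=> [x [] //| |x y [Hx [ex Ix]] [Hy [ey Iy]]|r x Hr [Hx [e Ix]]].
- by split; [exact: inR0|exists 1%N; rewrite expr1; exact: ideal0].
- split; first exact: inRD.
  exists (ex + ey)%N; rewrite exprDn; apply: ideal_sum => i; apply: ideal_mulrn.
  have [le_ey_i|lt_i_ey] := leqP ey i.
    by rewrite -(subnK le_ey_i) exprD mulrA; apply: idealM Iy; apply/inRM; apply: inRX.
  rewrite -(subnK (_ : ex <= ex + ey - i)%N) ?exprD; last by rewrite -addnBA ?leq_addr // ltnW.
  by rewrite mulrAC; apply: idealM Ix; apply/inRM; apply: inRX.
- by split; [exact: inRM|exists e; rewrite exprMn; apply: idealM => //; apply: inRX].
Qed.

Lemma rad_in_of x : inR h x -> I x -> rad_in h I x.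
Proof. by move=> Hx Ix; split=> //; exists 1%N; rewrite expr1. Qed.
End IdealTheory.

Lemma rad_in_root h I x e : inR h x -> rad_in h I (x ^+ e) -> rad_in h I x.
Proof. by move=> Hx [_ [N IxeN]]; split=> //; exists (e * N)%N; rewrite exprM. Qed.

Lemma gen_in_ideal h S : (forall g, S g -> inR h g) -> is_ideal_in h (gen_in h S).
Proof.
move=> SR; split.
- move=> _ [N [r [g [rg ->]]]]; apply: big_ind => [|x y|i _]; [exact: inR0|exact: inRD|].
  by case: (rg i) => Hr /SR; apply: inRM.
- by exists 0%N, (fun=> 0), (fun=> 0); split=> [[]//|]; rewrite big_ord0.
- move=> _ _ [N1 [r1 [g1 [rg1 ->]]]] [N2 [r2 [g2 [rg2 ->]]]].
  exists (N1 + N2)%N, (fun i => match split i with inl i1 => r1 i1 | inr i2 => r2 i2 end),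
    (fun i => match split i with inl i1 => g1 i1 | inr i2 => g2 i2 end).
  split; first by move=> i; case: split.
  have splitl (i : 'I_N1) : split (lshift N2 i) = inl i := unsplitK (inl i).
  have splitr (i : 'I_N2) : split (rshift N1 i) = inr i := unsplitK (inr i).
  rewrite big_split_ord; apply: congr2; apply: eq_bigr => i _; by rewrite ?splitl ?splitr.
- move=> r _ Hr [N [r1 [g1 [rg1 ->]]]]; exists N, (fun i => r * r1 i), g1; split.
    by move=> i; case: (rg1 i) => Hr1 Sg; split=> //; apply: inRM.
  by rewrite mulr_sumr; apply: eq_bigr => i _; rewrite mulrA.
Qed.

Lemma gen_in_gen h S g : S g -> gen_in h S g.
Proof.
move=> Sg; exists 1%N, (fun=> 1), (fun=> g).
by split=> [_|]; rewrite ?big_ord1 ?mul1r //; split=> //; exact: inR1.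
Qed.

Lemma gen_in_mono h h' S S' x :
  (h <= h')%N -> (forall g, S g -> S' g) -> gen_in h S x -> gen_in h' S' x.
Proof.
move=> le_h SS' [N [r [g [rg ->]]]]; exists N, r, g; split=> // i.
by case: (rg i) => Hr /SS'; split=> //; apply: inR_mono Hr.
Qed.

Lemma gen_in_min h h' S I x :
  (h <= h')%N -> is_ideal_in h' I -> (forall g, S g -> I g) -> gen_in h S x -> I x.
Proof.
move=> le_h idI SI [N [r [g [rg ->]]]]; apply: (ideal_sum idI) => i.
by case: (rg i) => Hr /SI; apply: (idealM idI); apply: inR_mono Hr.
Qed.
End Ideals.

Section PolyDerivations.
Variables (K : fieldType) (m n : nat).
Local Notation R := (dpoly K m n).
Variables (d : 'I_m -> K -> K) (D : 'I_m -> R -> R).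
Hypotheses (HD : forall j, is_derivation (D j))
  (HDc : forall j c, D j (dconst m n c) = dconst m n (d j c))
  (HDy : forall j v, D j (yvar K v) = yvar K (vshift j v)).

Lemma aord_shift (a : {ffun 'I_m -> nat}) j :
  aord [ffun i => a i + (i == j)]%N = (aord a).+1.
Proof.
rewrite /aord; under eq_bigr => i _ do rewrite ffunE.
rewrite big_split /= -addn1; congr (_ + _)%N.
by rewrite (bigD1 j) //= eqxx big1 // => i /negbTE ->.
Qed.

Lemma der_level h j x : inR h x -> inR h.+1 (D j x).
Proof.
move=> Hx; suff [] : inR h x /\ inR h.+1 (D j x) by [].
move: x Hx; apply: (inR_ind (h := h)) => [c|v v_h|x y [Hx Hx'] [Hy Hy']|x y [Hx Hx'] [Hy Hy']].
- by rewrite HDc; split; apply: inRC.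
- by rewrite HDy; split; apply: inRy; rewrite /vord ?aord_shift.
- by rewrite (derD HD); split; apply: inRD.
- rewrite (derM HD); split; first exact: inRM.
  by apply: inRD; apply: inRM => //; apply: inR_mono (leqnSn h) _.
Qed.

Lemma dword_nseq j k x : dword D (nseq k j) x = iter k (D j) x.
Proof. by elim: k => //= k ->. Qed.

Lemma theta_dword (a : {ffun 'I_m -> nat}) g : theta D a g = dword D (word_of a) g.
Proof.
have E (f : 'I_m -> nat) s :
    foldr (fun j => iter (f j) (D j)) g s = dword D (flatten [seq nseq (f i) i | i <- s]) g.
  by elim: s => //= i s ->; rewrite dword_cat dword_nseq.
exact: E.
Qed.

Lemma theta_level h a g : inR h g -> inR (h + aord a) (theta D a g).
Proof. by move=> Hg; rewrite theta_dword -size_word_of; apply: dword_level der_level Hg. Qed.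

Hypothesis dC : forall i j (c : K), d i (d j c) = d j (d i c).

Lemma derC i j x : D i (D j x) = D j (D i x).
Proof.
have [h Hx] := inR_exists x; move: x Hx.
apply: (inR_ind (h := h)) => [c|v _|x y Ex Ey|x y Ex Ey].
(* explicit instances: a pattern [D _ (dconst _ _ _)] makes unification unfold [dconst] *)
- transitivity (dconst m n (d i (d j c))); first by rewrite (HDc j c) (HDc i (d j c)).
  by rewrite dC (HDc i c) (HDc j (d i c)).
- transitivity (yvar K (vshift i (vshift j v))); first by rewrite (HDy j v) (HDy i (vshift j v)).
  rewrite (HDy i v) (HDy j (vshift i v)); congr yvar; congr pair; apply/ffunP => k.
  by rewrite !ffunE -!addnA (addnC (k == i)).
- exact: der_commD.
- exact: der_commM.
Qed.

Lemma der_theta j (a : {ffun 'I_m -> nat}) g :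
  D j (theta D a g) = theta D [ffun i => a i + (i == j)]%N g.
Proof.
rewrite !theta_dword -dword_cons; apply: (dword_perm derC).
by apply: perm_count_mem => i; rewrite /= !count_word_of ffunE addnC eq_sym.
Qed.

Section Prolongation.
Variables (l : nat) (J : R -> Prop).
Hypothesis HJ : forall g, J g -> inR l g.

Lemma Jk_ideal s : is_ideal_in (l + s) (Jk D l J s).
Proof.
apply: gen_in_ideal => _ [g [a [Jg le_a ->]]].
by apply/inR_mono/theta_level/HJ; rewrite ?leq_add2l.
Qed.

Lemma Jk_mono s s' x : (s <= s')%N -> Jk D l J s x -> Jk D l J s' x.
Proof.
move=> le_s; apply: gen_in_mono; first by rewrite leq_add2l.
by move=> _ [g [a [Jg le_a ->]]]; exists g, a; split=> //; apply: leq_trans le_s.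
Qed.

Lemma Jk_der s j x : Jk D l J s x -> Jk D l J s.+1 (D j x).
Proof.
move=> [N [r [g [rg ->]]]]; rewrite (der_sum HD j).
apply: (ideal_sum (Jk_ideal s.+1)) => i; rewrite (derM HD j).
case: (rg i) => Hr [g0 [a [Jg le_a ->]]].
apply: (idealD (Jk_ideal _)); apply: (idealM (Jk_ideal _)).
- by rewrite addnS; apply: der_level.
- by apply: gen_in_gen; exists g0, a; split=> //; apply: leq_trans le_a _.
- by apply: inR_mono Hr; rewrite leq_add2l.
- apply: gen_in_gen; exists g0, [ffun i => a i + (i == j)]%N.
  by rewrite der_theta aord_shift.
Qed.

Lemma Jk_dword s w x : Jk D l J s x -> Jk D l J (s + size w) (dword D w x).
Proof. by move=> Jx; elim: w => [|j w IH]; rewrite ?addn0 // addnS; apply: Jk_der. Qed.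
End Prolongation.
End PolyDerivations.

(* [mpoly] provides the graded monomial order on multi-indices; its notations
   clash with those of [monalg] used by [dpoly], so it is imported locally. *)
Section WordCount.
Import mpoly.
Variable m : nat.

Definition wcount (w : seq 'I_m) : 'X_{1..m} := [multinom count_mem i w | i < m].
Implicit Types (u v w : seq 'I_m) (al be mu nu : 'X_{1..m}).

Lemma wcount_nil : wcount [::] = 0%MM :> 'X_{1..m}.
Proof. by apply/mnmP => i; rewrite !mnmE. Qed.

Lemma wcount_cat u v : wcount (u ++ v) = (wcount u + wcount v)%MM.
Proof. by apply/mnmP => i; rewrite mnmDE !mnmE count_cat. Qed.

Lemma wcount_cons j w : wcount (j :: w) = (U_(j) + wcount w)%MM.
Proof.
rewrite -cat1s wcount_cat; congr (_ + _)%MM.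
by apply/mnmP => i; rewrite !mnmE /= addn0.
Qed.

Lemma mdeg_wcount w : mdeg (wcount w) = size w.
Proof.
elim: w => [|j w IH]; first by rewrite wcount_nil mdeg0.
by rewrite wcount_cons mdegD mdeg1 IH.
Qed.

Lemma perm_wcount u v : perm_eq u v = (wcount u == wcount v).
Proof.
apply/idP/eqP => [/permP E|E]; first by apply/mnmP => i; rewrite !mnmE E.
by apply: perm_count_mem => i; have /mnmP/(_ i) := E; rewrite !mnmE.
Qed.

Lemma wcount_flatten_nseq q w : wcount (flatten (nseq q w)) = (wcount w *+ q)%MM.
Proof. by elim: q => [|q IH]; rewrite ?wcount_nil //= wcount_cat IH mulmS. Qed.

Lemma splits_wcount w uv : uv \in splits w -> (wcount uv.1 + wcount uv.2)%MM = wcount w.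
Proof.
elim: w uv => [|j w IH] [u v] /=; first by rewrite inE => /eqP [-> ->]; rewrite wcount_nil addm0.
rewrite mem_cat => /orP[] /mapP [[u' v'] /IH /= E [-> ->]]; rewrite !wcount_cons -E.
  by rewrite addmA.
by rewrite addmA (addmC _ U_(j)%MM) addmA.
Qed.

Lemma splits_wcountP w al :
  (al <= wcount w)%MM -> exists2 uv, uv \in splits w & wcount uv.1 = al.
Proof.
elim: w al => [|j w IH] al.
  move=> /mnm_lepP le_al; exists ([::], [::]); rewrite ?mem_head //.
  by apply/mnmP => i; have := le_al i; rewrite wcount_nil !mnmE leqn0 => /eqP ->.
rewrite wcount_cons => le_al; have [alj0|alj_gt0] := posnP (al j).
  have [uv uv_w <-] : exists2 uv, uv \in splits w & wcount uv.1 = al.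
    apply: IH; apply/mnm_lepP => i; have := mnm_lepP le_al i.
    by rewrite mnmDE mnm1E; case: eqP => [<-|_]; rewrite ?alj0.
  by exists (uv.1, j :: uv.2); rewrite // mem_cat map_f ?orbT.
have le1 : (U_(j) <= al)%MM by rewrite lep1mP -lt0n.
have [uv uv_w E] : exists2 uv, uv \in splits w & wcount uv.1 = (al - U_(j))%MM.
  apply: IH; apply/mnm_lepP => i; have := mnm_lepP le_al i.
  by rewrite mnmDE !mnmE leq_subLR.
exists (j :: uv.1, uv.2); first by rewrite mem_cat map_f.
by rewrite /= wcount_cons E addmC submK.
Qed.

Lemma has_splits w al be :
  has (fun uv => (wcount uv.1 == al) && (wcount uv.2 == be)) (splits w) =
  (wcount w == al + be)%MM.
Proof.
apply/hasP/eqP => [[uv /splits_wcount <- /andP [/eqP -> /eqP ->]] //|E].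
have [uv uv_w E1] : exists2 uv, uv \in splits w & wcount uv.1 = al.
  by apply: splits_wcountP; rewrite E lem_addr.
exists uv; rewrite // E1 eqxx /=.
by apply/eqP/(@addmI _ al); rewrite -{1}E1 (splits_wcount uv_w) E.
Qed.

Lemma le_mulmS_split al mu nu q :
  ((mu + nu)%MM <= (al *+ q.+1)%MM)%O -> (al <= mu)%O -> (nu <= (al *+ q)%MM)%O.
Proof.
move=> le_uv le_al; rewrite leNgt; apply/negP => lt_v.
by have := lt_le_trans (lemc_lt_add le_al lt_v) le_uv; rewrite -mulmS ltxx.
Qed.

Lemma eq_mulmS_split al mu q :
  ((mu + al *+ q)%MM <= (al *+ q.+1)%MM)%O -> (al <= mu)%O -> mu = al.
Proof. by rewrite mulmS lemc_add2l => le_u le_al; apply/le_anti; rewrite le_u le_al. Qed.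
End WordCount.

Section PowerExpansion.
Import mpoly.
Variables (K : fieldType) (m n : nat).
Local Notation R := (dpoly K m n).
Variable D : 'I_m -> R -> R.
Hypotheses (HD : forall j, is_derivation (D j))
  (derC : forall i j x, D i (D j x) = D j (D i x))
  (der_level : forall h j x, inR h x -> inR h.+1 (D j x)).
Variables (H : nat) (Q : R -> Prop).
Hypothesis idQ : is_ideal_in H Q.
Variables (l p : nat) (a : R) (wa : seq 'I_m).
Hypotheses (Ha : inR l a) (p_gt0 : (0 < p)%N) (le_H : (l + size wa * p <= H)%N)
  (Q_lower : forall u, (wcount u < wcount wa)%O -> Q (dword D u a)).

Local Notation al := (wcount wa).
Local Notation z := (dword D wa a).

Lemma dword_inRH w q x : (wcount w <= (al *+ q)%MM)%O -> (q <= p)%N -> inR l x ->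
  inR H (dword D w x).
Proof.
move=> /lemc_mdeg le_w le_q Hx; suff le_lw : (l + size w <= H)%N.
  exact: inR_mono le_lw (dword_level der_level Hx).
apply: leq_trans le_H; rewrite leq_add2l -mdeg_wcount.
by apply: leq_trans le_w _; rewrite mdegMn mdeg_wcount leq_mul2l le_q orbT.
Qed.

Lemma dword_base_inRH : inR H z.
Proof. by apply: (dword_inRH (q := 1)) Ha; rewrite ?mulm1n. Qed.

Lemma dword_expr_mod q : (q <= p)%N -> forall w, (wcount w <= (al *+ q)%MM)%O ->
  exists2 c, Q (dword D w (a ^+ q) - z ^+ q *+ c) & (0 < c)%N = (wcount w == al *+ q)%MM.
Proof.
elim: q => [|q IH] le_qp w le_w.
  have w0 : w = [::].
    apply/nilP; rewrite /nilp -mdeg_wcount mdeg_eq0; apply/eqP/le_anti.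
    by rewrite le0m andbT -(mulm0n al).
  rewrite w0; exists 1%N; last by rewrite wcount_nil mulm0n eqxx.
  by rewrite !expr0 mulr1n [dword _ _ _]/= subrr; exact: (ideal0 idQ).
have term uv : uv \in splits w -> exists2 c,
    Q (dword D uv.1 a * dword D uv.2 (a ^+ q) - z ^+ q.+1 *+ c) &
    (0 < c)%N = (wcount uv.1 == al) && (wcount uv.2 == al *+ q)%MM.
  case: uv => u v uv_w /=; have wuv := splits_wcount uv_w.
  have le_uv : ((wcount u + wcount v)%MM <= (al *+ q.+1)%MM)%O by rewrite wuv.
  have Hu : inR H (dword D u a) := dword_inRH (le_trans (lemc_addr _ _) le_uv) le_qp Ha.
  have Hv : inR H (dword D v (a ^+ q)) :=
    dword_inRH (le_trans (lemc_addl _ _) le_uv) le_qp (inRX Ha).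
  have [lt_u|le_u] := ltP (wcount u) al.
    exists 0%N; last by rewrite (lt_eqF lt_u).
    by rewrite mulr0n subr0 mulrC; apply: (idealM idQ Hv (Q_lower lt_u)).
  have [c Qc Ec] := IH (ltnW le_qp) v (le_mulmS_split le_uv le_u).
  have [ev|nev] := eqVneq (wcount v) (al *+ q)%MM.
    have eu : wcount u = al by apply: (eq_mulmS_split (q := q)) le_u; rewrite -ev.
    exists c; last by rewrite Ec ev eu !eqxx.
    have -> : dword D u a = z by apply: (dword_perm derC); rewrite perm_wcount eu eqxx.
    by rewrite exprS -mulrnAr -mulrBr; apply: (idealM idQ dword_base_inRH Qc).
  have c0 : c = 0%N by apply/eqP; rewrite -leqn0 leqNgt Ec.
  exists 0%N; last by move: nev; rewrite andbC; case: eqP.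
  move: Qc; rewrite c0 !mulr0n !subr0 => Qv.
  exact: (idealM idQ Hu Qv).
have [c Qc Ec] := ideal_sum_mulrn idQ term.
exists c; last by rewrite Ec has_splits -mulmS.
by rewrite exprS (dword_mul HD).
Qed.
End PowerExpansion.

Section JprimeRadical.
Import mpoly.
Variables (K : fieldType) (m n : nat).
Local Notation R := (dpoly K m n).
Variables (d : 'I_m -> K -> K) (D : 'I_m -> R -> R).
Hypotheses (HD : forall j, is_derivation (D j))
  (HDc : forall j c, D j (dconst m n c) = dconst m n (d j c))
  (HDy : forall j v, D j (yvar K v) = yvar K (vshift j v))
  (dC : forall i j (c : K), d i (d j c) = d j (d i c))
  (char0 : [pchar K] =i pred0).
Variables (l : nat) (J : R -> Prop) (p k : nat).
Hypotheses (HJ : forall g, J g -> inR l g) (p_gt0 : (0 < p)%N)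
  (Hpow : forall x, ideal_pow l (Jprime D l J) p x -> Jk D l J 1 x).

Local Notation H := (l + (k * p + 1))%N.
Local Notation Q := (rad_in H (Jk D l J (k * p + 1))).

Lemma rad_Jk_ideal : is_ideal_in H Q.
Proof. exact/rad_in_ideal/(Jk_ideal HD HDc HDy HJ). Qed.

Lemma Jk_dword_expr a w : Jprime D l J a -> (size w <= k * p)%N ->
  Jk D l J (k * p + 1) (dword D w (a ^+ p)).
Proof.
move=> Ja le_w; apply: (Jk_mono (s := 1 + size w)); first by rewrite addnC leq_add2r.
apply: (Jk_dword HD HDc HDy dC HJ); apply/Hpow/gen_in_gen.
by exists (fun=> a); split=> //; rewrite prodr_const card_ord.
Qed.

Lemma Jprime_dword a : Jprime D l J a -> forall w, (size w <= k)%N -> Q (dword D w a).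
Proof.
move=> Ja; have Ha : inR l a by case: Ja.
suff Qal al w : wcount w = al -> (size w <= k)%N -> Q (dword D w a) by move=> w; apply: Qal.
elim/(@ltmwf m): al w => al IH w wal le_wk; subst al.
have Q_lower u : (wcount u < wcount w)%O -> Q (dword D u a).
  move=> lt_u; apply: (IH _ lt_u u erefl); rewrite -mdeg_wcount.
  by apply: leq_trans (lemc_mdeg (ltW lt_u)) _; rewrite mdeg_wcount.
have le_H : (l + size w * p <= H)%N.
  by rewrite leq_add2l; apply: leq_trans (leq_addr 1 _); rewrite leq_mul2r le_wk orbT.
set wp := flatten (nseq p w).
have wpE : wcount wp = (wcount w *+ p)%MM := wcount_flatten_nseq p w.
have le_wp : (wcount wp <= (wcount w *+ p)%MM)%O by rewrite wpE.
have [c Qc] := dword_expr_mod HD (derC HD HDc HDy dC) (der_level HD HDc HDy)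
  rad_Jk_ideal Ha p_gt0 le_H Q_lower (leqnn p) le_wp.
rewrite wpE eqxx => c_gt0.
have Twp : Jk D l J (k * p + 1) (dword D wp (a ^+ p)).
  apply: Jk_dword_expr => //; rewrite -mdeg_wcount wpE mdegMn mdeg_wcount.
  by rewrite leq_mul2r le_wk orbT.
have Qwp := rad_in_of (ideal_inR (Jk_ideal HD HDc HDy HJ _) Twp) Twp.
have Qzp : Q (dword D w a ^+ p).
  apply: (ideal_mulrn_inv rad_Jk_ideal char0 c_gt0).
  by have := idealB rad_Jk_ideal Qwp Qc; rewrite subKr.
exact: rad_in_root (dword_base_inRH (der_level HD HDc HDy) Ha p_gt0 le_H) Qzp.
Qed.
End JprimeRadical.

Theorem lemma3p1 (K : fieldType) (m n : nat)
  (d : 'I_m -> K -> K)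
  (Hchar : [pchar K] =i pred0)
  (Hd : forall j, is_derivation (d j))
  (Hcomm : forall i j (x : K), d i (d j x) = d j (d i x))
  (D : 'I_m -> dpoly K m n -> dpoly K m n)
  (HDder : forall j, is_derivation (D j))
  (HDc : forall j (c : K), D j (dconst m n c) = dconst m n (d j c))
  (HDy : forall j (v : dvar m n), D j (yvar K v) = yvar K (vshift j v))
  (l : nat) (J : dpoly K m n -> Prop) (HJ : is_ideal_in l J)
  (p : nat) (Hp : (0 < p)%N)
  (Hpow : forall x, ideal_pow l (Jprime D l J) p x -> Jk D l J 1 x)
  (k : nat) :
  forall x : dpoly K m n,
    rad_in (l + k) (Jk D l (Jprime D l J) k) x ->
    rad_in (l + k * p + 1) (Jk D l J (k * p + 1)) x.
Proof.
move=> x [Hx [e xe]]; rewrite -addnA.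
have JR : forall g, J g -> inR l g by case: HJ.
have idQ := rad_Jk_ideal HDder HDc HDy p k JR.
have le_k : (l + k <= l + (k * p + 1))%N.
  by rewrite leq_add2l; apply: leq_trans (leq_addr 1 _); rewrite leq_pmulr.
apply: (rad_in_root (inR_mono le_k Hx)); apply: (gen_in_min le_k idQ _ xe).
move=> _ [g [a [Jg le_a ->]]]; rewrite theta_dword.
by apply: (Jprime_dword HDder HDc HDy Hcomm Hchar JR Hp Hpow Jg); rewrite size_word_of.
Qed.
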